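(* Consider two GP-ASSMs (as defined in the context), built from the same training data, kernel and mean function, with maximum memory lengths $\overline m,\overline m'\in\mathbb{N}$, $\overline m'>\overline m$, evaluated along the same states and inputs $\bm\xi_{0:t}$, so that $\bm x_{t+1}^m\sim\mathcal N(\bm f_t(\bm\xi_t,\Xi^m_t),F_t(\bm\xi_t,\Xi^m_t))$ and $\bm x_{t+1}^{m'}\sim\mathcal N(\bm f_t(\bm\xi_t,\Xi^{m'}_t),F_t(\bm\xi_t,\Xi^{m'}_t))$. Then $$\operatorname{tr}\big(F_t(\bm\xi_t,\Xi^{m'}_t)\big)\le\operatorname{tr}\big(F_t(\bm\xi_t,\Xi^{m}_t)\big)$$ holds for all $t\in\mathbb{N}$.
   Context: Training set $\mathcal D=\{X,Y\}$ with input matrix $X\in\mathbb{R}^{n_\xi\times n_{\mathcal D}}$ and output matrix $Y\in\mathbb{R}^{n_{\mathcal D}\times n_x}$, outputs corrupted by Gaussian noise $\mathcal N(0,\sigma_n^2 I)$. A kernel $k:\mathbb{R}^{n_\xi}\times\mathbb{R}^{n_\xi}\to\mathbb{R}$ (symmetric, positive semidefinite) and a continuous mean function $m:\mathbb{R}^{n_\xi}\to\mathbb{R}$ are used for every output dimension. For matrices $A=[a_1,\dots,a_p]$, $B=[b_1,\dots,b_q]$ with columns in $\mathbb{R}^{n_\xi}$, $K(A,B)$ is the $p\times q$ matrix with entries $k(a_i,b_j)$, $\bm k(z,A)=(k(z,a_1),\dots,k(z,a_p))^\top$, $\bm m(A)=(m(a_1),\dots,m(a_p))^\top$, and $K:=K(X,X)$.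 GP-ASSM with maximum memory length $\overline m\in\mathbb{N}$: states $\bm x_t\in\mathbb{R}^{n_x}$, inputs $\bm u_t\in\mathbb{R}^{n_u}$, $\bm\xi_t=[\bm x_t;\bm u_t]\in\mathbb{R}^{n_\xi}$, $n_\xi=n_x+n_u$. For $t\in\mathbb{N}$ let $\underline m=\min(t,\overline m)$, memory $\Xi^m_t=[\bm\xi_{t-1},\dots,\bm\xi_{t-\underline m}]$ (empty if $\underline m=0$), $X^m_t=[X,\bm\xi_{t-\underline m},\dots,\bm\xi_{t-1}]$, $Y^m_t=[Y^\top,\bm x_{t-\underline m+1},\dots,\bm x_t]^\top$, and with $\Xi=[\bm\xi_{t-\underline m},\dots,\bm\xi_{t-1}]$, $K^m_t=\begin{bmatrix}K+\sigma_n^2I & K(X,\Xi)\\ K(\Xi,X)&K(\Xi,\Xi)\end{bmatrix}$ (and $K^m_t=K+\sigma_n^2 I$ if $\underline m=0$). Define $\bm f_t(\bm\xi_t,\Xi^m_t)\in\mathbb{R}^{n_x}$ with $i$-th component $m(\bm\xi_t)+\bm k(\bm\xi_t,X^m_t)^\top(K^m_t)^{-1}\big((Y^m_t)_{:,i}-\bm m(X^m_t)\big)$ and the diagonal matrix $F_t(\bm\xi_t,\Xi^m_t)$ with all diagonal entries $k(\bm\xi_t,\bm\xi_t)-\bm k(\bm\xi_t,X^m_t)^\top(K^m_t)^{-1}\bm k(\bm\xi_t,X^m_t)$ (inverses are Moore–Penrose pseudoinverses if singular). The GP-ASSM generates $\bm x^m_{t+1}\mid\bm\xi_{0:t}\sim\mathcal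 N(\bm f_t(\bm\xi_t,\Xi^m_t),F_t(\bm\xi_t,\Xi^m_t))$; quantities with superscript $m'$ are defined in the same way with $\overline m'$ in place of $\overline m$. *)

From HB Require Import structures.
From mathcomp Require Import all_boot all_order all_algebra.
From mathcomp Require Import boolp classical_sets reals topology normedtype.
Import numFieldNormedType.Exports.
Set Implicit Arguments. Unset Strict Implicit. Unset Printing Implicit Defensive.
Import Order.TTheory GRing.Theory Num.Theory.
Local Open Scope ring_scope.

Section GPASSM.
Variable R : realType.

Definition is_MP_inverse m n (A : 'M[R]_(m, n)) (P : 'M[R]_(n, m)) : Prop :=
  [/\ A *m P *m A = A, P *m A *m P = P,
      (A *m P)^T = A *m P & (P *m A)^T = P *m A].

Definition MP_pinv m n (A : 'M[R]_(m, n)) : 'M[R]_(n, m) :=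
  match pselect (exists P, is_MP_inverse A P) with
  | left h => projT1 (cid h)
  | right _ => 0
  end.

Definition gp_inv n (A : 'M[R]_n) : 'M[R]_n :=
  if A \in unitmx then invmx A else MP_pinv A.

Definition kernel_symmetric d (k : 'cV[R]_d -> 'cV[R]_d -> R) : Prop :=
  forall a b, k a b = k b a.

Definition Kmat d p q (k : 'cV[R]_d -> 'cV[R]_d -> R)
    (A : 'M[R]_(d, p)) (B : 'M[R]_(d, q)) : 'M[R]_(p, q) :=
  \matrix_(i, j) k (col i A) (col j B).

Definition kernel_psd d (k : 'cV[R]_d -> 'cV[R]_d -> R) : Prop :=
  forall p (A : 'M[R]_(d, p)) (c : 'cV[R]_p), 0 <= (c^T *m Kmat k A A *m c) 0 0.

Definition kvec d p (k : 'cV[R]_d -> 'cV[R]_d -> R) (z : 'cV[R]_d)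
    (A : 'M[R]_(d, p)) : 'cV[R]_p :=
  \col_i k z (col i A).

Definition mvec d p (mf : 'cV[R]_d -> R) (A : 'M[R]_(d, p)) : 'cV[R]_p :=
  \col_i mf (col i A).

Definition mlow (mbar t : nat) : nat := minn t mbar.

Definition Ximem d (xi : nat -> 'cV[R]_d) (mbar t : nat) : 'M[R]_(d, mlow mbar t) :=
  \matrix_(i, j) xi (t - mlow mbar t + j)%N i 0.

Definition Xmem d nD (X : 'M[R]_(d, nD)) (xi : nat -> 'cV[R]_d) (mbar t : nat)
  : 'M[R]_(d, nD + mlow mbar t) := row_mx X (Ximem xi mbar t).

Definition Ymem nx nD (Y : 'M[R]_(nD, nx)) (x : nat -> 'cV[R]_nx) (mbar t : nat)
  : 'M[R]_(nD + mlow mbar t, nx) :=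
  col_mx Y (\matrix_(j < mlow mbar t, i < nx) x (t - mlow mbar t + j.+1)%N i 0).

Definition Kmem d nD (k : 'cV[R]_d -> 'cV[R]_d -> R) (sigma_n : R)
    (X : 'M[R]_(d, nD)) (xi : nat -> 'cV[R]_d) (mbar t : nat)
  : 'M[R]_(nD + mlow mbar t) :=
  let Xi := Ximem xi mbar t in
  block_mx (Kmat k X X + sigma_n ^+ 2 *: 1%:M) (Kmat k X Xi)
           (Kmat k Xi X) (Kmat k Xi Xi).

Definition gp_var d nD (k : 'cV[R]_d -> 'cV[R]_d -> R) (sigma_n : R)
    (X : 'M[R]_(d, nD)) (xi : nat -> 'cV[R]_d) (mbar t : nat) : R :=
  let kv := kvec k (xi t) (Xmem X xi mbar t) in
  k (xi t) (xi t) - (kv^T *m gp_inv (Kmem k sigma_n X xi mbar t) *m kv) 0 0.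

Definition Ft nx d nD (k : 'cV[R]_d -> 'cV[R]_d -> R) (sigma_n : R)
    (X : 'M[R]_(d, nD)) (xi : nat -> 'cV[R]_d) (mbar t : nat) : 'M[R]_nx :=
  (gp_var k sigma_n X xi mbar t)%:M.

Definition ft nx d nD (k : 'cV[R]_d -> 'cV[R]_d -> R) (mf : 'cV[R]_d -> R)
    (sigma_n : R) (X : 'M[R]_(d, nD)) (Y : 'M[R]_(nD, nx))
    (x : nat -> 'cV[R]_nx) (xi : nat -> 'cV[R]_d) (mbar t : nat) : 'cV[R]_nx :=
  let Xm := Xmem X xi mbar t in
  let kv := kvec k (xi t) Xm in
  \col_i (mf (xi t) + (kv^T *m gp_inv (Kmem k sigma_n X xi mbar t)
            *m (col i (Ymem Y x mbar t) - mvec mf Xm)) 0 0).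

End GPASSM.

From HB Require Import structures.
From mathcomp Require Import all_boot all_order all_algebra.
From mathcomp Require Import boolp classical_sets reals topology normedtype.
From mathcomp Require Import zify ring lra.
Import numFieldNormedType.Exports.
Set Implicit Arguments. Unset Strict Implicit. Unset Printing Implicit Defensive.
Import Order.TTheory GRing.Theory Num.Theory.
Local Open Scope ring_scope.

(* The diagonal entry of F_t is the Schur complement k(z,z) - kv^T K^+ kv of the bordered
   Gram matrix [K kv; kv^T k(z,z)], which is positive semidefinite.  This puts kv in the
   range of K, kv = K w, so the quadratic form equals w^T K w for every generalized inverse
   of K, the inverse and the Moore-Penrose pseudoinverse alike.  The covariance matrix of the
   shorter memory is a principal submatrix S K' S^T of the longer one, since its window is a
   suffix of the longer window, and kv = S kv'.  With c = S^T w, expanding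
   0 <= (w' - c)^T K' (w' - c) gives w^T K w <= w'^T K' w': the variance can only decrease
   when the memory grows. *)

Section GeneralizedInverse.
Variable R : realType.

Lemma mulmx_trmx_ge0 n (v : 'rV[R]_n) : 0 <= (v *m v^T) 0 0.
Proof. by rewrite mxE; apply: sumr_ge0 => j _; rewrite mxE -expr2 sqr_ge0. Qed.

Lemma mulmx_trmx_eq0 n (v : 'rV[R]_n) : (v *m v^T) 0 0 = 0 -> v = 0.
Proof.
rewrite mxE => /psumr_eq0P sq0; apply/matrixP => i j; rewrite (ord1 i) mxE.
have /eqP : v 0 j * v^T j 0 = 0 by apply: sq0 => // l _; rewrite mxE -expr2 sqr_ge0.
by rewrite mxE mulf_eq0 orbb => /eqP.
Qed.

Lemma row_free_gram_unitmx r n (B : 'M[R]_(r, n)) :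
  row_free B -> B *m B^T \in unitmx.
Proof.
move=> freeB; rewrite unitmxE unitfE; apply/negP => /det0P [v v_neq0 vBBt0].
have vB0 : v *m B = 0.
  apply: mulmx_trmx_eq0.
  by rewrite trmx_mul !mulmxA -(mulmxA v) vBBt0 mul0mx mxE.
by move: v_neq0; rewrite -(mul0mx _ B) in vB0; rewrite (row_free_inj freeB vB0) eqxx.
Qed.

Lemma full_rank_factorization m n (A : 'M[R]_(m, n)) :
  exists r (C : 'M[R]_(m, r)) (B : 'M[R]_(r, n)),
    [/\ A = C *m B, row_free B & row_free C^T].
Proof.
exists (\rank A), (A *m pinvmx (row_base A)), (row_base A).
have AE : A = A *m pinvmx (row_base A) *m row_base A.
  by rewrite mulmxKpV // eq_row_base.
split => //; first exact: row_base_free.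
rewrite /row_free mxrank_tr eqn_leq rank_leq_col /=.
by have := mxrankM_maxl (A *m pinvmx (row_base A)) (row_base A); rewrite -AE.
Qed.

Lemma MP_inverse_exists m n (A : 'M[R]_(m, n)) : exists P, is_MP_inverse A P.
Proof.
have [r [C [B [-> freeB freeCt]]]] := full_rank_factorization A.
have uB := row_free_gram_unitmx freeB.
have uC := row_free_gram_unitmx freeCt; rewrite trmxK in uC.
set GB := invmx (B *m B^T); set GC := invmx (C^T *m C).
have GBt : GB^T = GB by rewrite trmx_inv trmx_mul trmxK.
have GCt : GC^T = GC by rewrite trmx_inv trmx_mul trmxK.
have BK p (Z : 'M[R]_(p, r)) : Z *m B *m B^T *m GB = Z.
  by rewrite -(mulmxA Z) -(mulmxA Z) (mulmxV uB) mulmx1.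
have CK p (Z : 'M[R]_(p, r)) : Z *m GC *m C^T *m C = Z.
  by rewrite -(mulmxA Z) -(mulmxA Z) -(mulmxA GC) (mulVmx uC) mulmx1.
exists (B^T *m GB *m GC *m C^T).
have AP : C *m B *m (B^T *m GB *m GC *m C^T) = C *m GC *m C^T.
  by rewrite !mulmxA BK.
have PA : B^T *m GB *m GC *m C^T *m (C *m B) = B^T *m GB *m B.
  by rewrite !mulmxA CK.
split.
- by rewrite AP !mulmxA CK.
- by rewrite PA !mulmxA BK.
- by rewrite AP !trmx_mul trmxK GCt !mulmxA.
- by rewrite PA !trmx_mul trmxK GBt !mulmxA.
Qed.

Lemma mulmx_gp_invK n (K : 'M[R]_n) : K *m gp_inv K *m K = K.
Proof.
rewrite /gp_inv; case: ifP => uK; first by rewrite mulmxV // mul1mx.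
rewrite /MP_pinv; case: pselect => [ex|]; last by move: (MP_inverse_exists K).
by case: (cid ex) => P [].
Qed.

End GeneralizedInverse.

Section PSDMatrices.
Variable R : realType.

Definition psd_mx n (A : 'M[R]_n) := forall c : 'cV[R]_n, 0 <= (c^T *m A *m c) 0 0.

Lemma psd_mxD n (A B : 'M[R]_n) : psd_mx A -> psd_mx B -> psd_mx (A + B).
Proof. by move=> psdA psdB c; rewrite mulmxDr mulmxDl mxE addr_ge0. Qed.

Lemma psd_mx_sqr_scalar n (s : R) : psd_mx (s ^+ 2 *: 1%:M : 'M_n).
Proof.
move=> c; rewrite scalemx1 mul_mx_scalar -scalemxAl mxE.
by rewrite mulr_ge0 ?sqr_ge0 // -{2}[c]trmxK mulmx_trmx_ge0.
Qed.

Lemma psd_block_mx0 n m (A : 'M[R]_n) :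
  psd_mx A -> psd_mx (block_mx A 0 0 (0 : 'M_m)).
Proof.
move=> psdA c; rewrite -[c]vsubmxK tr_col_mx mul_row_block !mulmx0 !addr0.
by rewrite mul_row_col mul0mx addr0.
Qed.

Definition bordered_mx n (K : 'M[R]_n) (kv : 'cV[R]_n) (kzz : R) : 'M[R]_(n + 1) :=
  block_mx K kv kv^T kzz%:M.

Lemma bordered_mxDl n (K N : 'M[R]_n) kv kzz :
  bordered_mx (K + N) kv kzz = bordered_mx K kv kzz + block_mx N 0 0 0.
Proof. by rewrite /bordered_mx add_block_mx !addr0. Qed.

Lemma mx11_tr (A : 'M[R]_1) : A^T 0 0 = A 0 0.
Proof. by rewrite mxE. Qed.

Lemma bordered_mx_form n (K : 'M[R]_n) kv kzz c b :
  ((col_mx c b%:M)^T *m bordered_mx K kv kzz *m col_mx c b%:M) 0 0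
  = (c^T *m K *m c) 0 0 + 2 * b * (c^T *m kv) 0 0 + b ^+ 2 * kzz.
Proof.
rewrite tr_col_mx mul_row_block mul_row_col !mulmxDl.
rewrite tr_scalar_mx !mul_scalar_mx !mul_mx_scalar -!scalemxAl.
have -> : kv^T *m c = (c^T *m kv)^T by rewrite trmx_mul trmxK.
rewrite !mxE eqxx mulr1n; ring.
Qed.

Lemma psd_bordered_mx_psd n (K : 'M[R]_n) kv kzz :
  psd_mx (bordered_mx K kv kzz) -> psd_mx K.
Proof.
move=> psdB c; have := psdB (col_mx c 0%:M).
by rewrite bordered_mx_form mulr0 mul0r expr0n mul0r !addr0.
Qed.

Lemma psd_bordered_mx_range n (K : 'M[R]_n) kv kzz : K^T = K ->
  psd_mx (bordered_mx K kv kzz) -> exists w, kv = K *m w.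
Proof.
move=> symK psdB; have [/submxP [w kvE]|] := boolP (kv^T <= K)%MS.
  by exists w^T; rewrite -[kv]trmxK kvE trmx_mul symK.
rewrite submxE => coker_neq0.
have [j sj_neq0] : exists j, (kv^T *m cokermx K) 0 j != 0.
  apply/existsP; apply: contraNT coker_neq0; rewrite negb_exists => /forallP s0.
  apply/eqP/matrixP => i j; rewrite (ord1 i) [RHS]mxE.
  by have := s0 j; rewrite negbK => /eqP.
set v := col j (cokermx K); set s := (kv^T *m cokermx K) 0 j.
have Kv0 : K *m v = 0.
  by rewrite /v colE mulmxA mulmx_coker mul0mx.
have vkv : (v^T *m kv) 0 0 = s.
  by rewrite -mx11_tr trmx_mul trmxK /v colE mulmxA -colE mxE.
(* On col_mx (a *: v) 1 the form is 2 a s + kzz, and a makes it negative. *)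
set a := - (kzz + 1) / (2 * s).
have := psdB (col_mx (a *: v) 1%:M).
rewrite bordered_mx_form !linearZ /= -!scalemxAl -mulmxA Kv0 mulmx0 !scaler0.
have -> : (a *: (v^T *m kv)) 0 0 = a * s by rewrite mxE vkv.
rewrite mxE expr1n mul1r mulr1 add0r.
have -> : 2 * (a * s) = - (kzz + 1) by rewrite /a; field.
lra.
Qed.

Lemma ginv_quad_form n (K P : 'M[R]_n) (kv w : 'cV[R]_n) :
  K *m P *m K = K -> K^T = K -> kv = K *m w -> kv^T *m P *m kv = w^T *m K *m w.
Proof.
move=> KPK symK ->; rewrite trmx_mul symK !mulmxA; congr (_ *m w).
by rewrite -[w^T *m K *m P]mulmxA -mulmxA KPK.
Qed.

Lemma schur_compl_le n n' (K : 'M[R]_n) (K' : 'M[R]_n') kv kv' kzz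
    (S : 'M[R]_(n, n')) :
  K'^T = K' -> K = S *m K' *m S^T -> kv = S *m kv' ->
  psd_mx (bordered_mx K kv kzz) -> psd_mx (bordered_mx K' kv' kzz) ->
  kzz - (kv'^T *m gp_inv K' *m kv') 0 0 <= kzz - (kv^T *m gp_inv K *m kv) 0 0.
Proof.
move=> symK' KE kvE psdB psdB'.
have symK : K^T = K by rewrite KE !trmx_mul trmxK symK' mulmxA.
have [w kvKw] := psd_bordered_mx_range symK psdB.
have [w' kvKw'] := psd_bordered_mx_range symK' psdB'.
rewrite (ginv_quad_form (mulmx_gp_invK K) symK kvKw).
rewrite (ginv_quad_form (mulmx_gp_invK K') symK' kvKw').
set c := S^T *m w.
have wKw : w^T *m K *m w = c^T *m K' *m c by rewrite KE trmx_mul trmxK !mulmxA.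
have cKw' : c^T *m K' *m w' = c^T *m K' *m c.
  rewrite -mulmxA -kvKw' {1}/c trmx_mul trmxK -[w^T *m S *m kv']mulmxA -kvE.
  by rewrite kvKw mulmxA wKw /c trmx_mul trmxK.
have w'Kc : (w'^T *m K' *m c) 0 0 = (c^T *m K' *m w') 0 0.
  by rewrite -mx11_tr !trmx_mul !trmxK symK' mulmxA.
have := psd_bordered_mx_psd psdB' (w' - c).
rewrite linearB /= raddfB /= !mulmxBl wKw cKw'.
move: w'Kc; rewrite cKw'.
move: (w'^T *m K' *m w') (w'^T *m K' *m c) (c^T *m K' *m c) => A B C.
rewrite !mxE; lra.
Qed.

End PSDMatrices.

Section KernelMatrices.
Variables (R : realType) (d : nat) (k : 'cV[R]_d -> 'cV[R]_d -> R).
Hypothesis k_sym : kernel_symmetric k.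

Lemma trmx_Kmat p q (A : 'M[R]_(d, p)) (B : 'M[R]_(d, q)) :
  (Kmat k A B)^T = Kmat k B A.
Proof. by apply/matrixP => i j; rewrite !mxE k_sym. Qed.

Lemma Kmat_row_mx p1 p2 q1 q2 (A1 : 'M[R]_(d, p1)) (A2 : 'M[R]_(d, p2))
    (B1 : 'M[R]_(d, q1)) (B2 : 'M[R]_(d, q2)) :
  Kmat k (row_mx A1 A2) (row_mx B1 B2)
  = block_mx (Kmat k A1 B1) (Kmat k A1 B2) (Kmat k A2 B1) (Kmat k A2 B2).
Proof.
apply/matrixP => i j; rewrite mxE.
case: (split_ordP i) => a ->; case: (split_ordP j) => b ->;
  by rewrite ?colKl ?colKr ?block_mxEul ?block_mxEur ?block_mxEdl ?block_mxEdr mxE.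
Qed.

Lemma Kmat_bordered p (A : 'M[R]_(d, p)) (z : 'cV[R]_d) :
  Kmat k (row_mx A z) (row_mx A z) = bordered_mx (Kmat k A A) (kvec k z A) (k z z).
Proof.
have Kz : Kmat k A z = kvec k z A.
  by apply/matrixP => i j; rewrite !mxE (ord1 j) col_id k_sym.
rewrite Kmat_row_mx /bordered_mx -Kz trmx_Kmat; congr block_mx.
by apply/matrixP => i j; rewrite !mxE !ord1 col_id.
Qed.

Lemma Kmat_colsub p p' q q' (f : 'I_p' -> 'I_p) (g : 'I_q' -> 'I_q)
    (A : 'M[R]_(d, p)) (B : 'M[R]_(d, q)) :
  Kmat k (colsub f A) (colsub g B) = mxsub f g (Kmat k A B).
Proof. by apply/matrixP => i j; rewrite !mxE !col_colsub. Qed.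

Lemma kvec_colsub p p' (f : 'I_p' -> 'I_p) (z : 'cV[R]_d) (A : 'M[R]_(d, p)) :
  kvec k z (colsub f A) = rowsub f (kvec k z A).
Proof. by apply/matrixP => i j; rewrite !mxE col_colsub. Qed.

End KernelMatrices.

Section GPCovariance.
Variables (R : realType) (d nD : nat) (k : 'cV[R]_d -> 'cV[R]_d -> R) (sg : R).
Variables (X : 'M[R]_(d, nD)) (xi : nat -> 'cV[R]_d) (mb t : nat).
Hypotheses (k_sym : kernel_symmetric k) (k_psd : kernel_psd k).

Lemma Kmem_E : Kmem k sg X xi mb t
  = Kmat k (Xmem X xi mb t) (Xmem X xi mb t) + block_mx (sg ^+ 2 *: 1%:M) 0 0 0.
Proof. by rewrite /Kmem Kmat_row_mx add_block_mx !addr0. Qed.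

Lemma trmx_Kmem : (Kmem k sg X xi mb t)^T = Kmem k sg X xi mb t.
Proof.
by rewrite Kmem_E linearD /= trmx_Kmat // tr_block_mx !trmx0 linearZ /= trmx1.
Qed.

Lemma Kmem_bordered_psd :
  psd_mx (bordered_mx (Kmem k sg X xi mb t)
            (kvec k (xi t) (Xmem X xi mb t)) (k (xi t) (xi t))).
Proof.
rewrite Kmem_E bordered_mxDl -Kmat_bordered //.
apply: psd_mxD; first exact: k_psd.
by do 2 apply: psd_block_mx0; exact: psd_mx_sqr_scalar.
Qed.

End GPCovariance.

Section BlockEmbedding.
Variables (R : realType) (n m m' : nat) (f : 'I_m -> 'I_m').

Definition block_embed (i : 'I_(n + m)) : 'I_(n + m') :=
  match split i with inl a => lshift m' a | inr b => rshift n (f b) end.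

Lemma colsub_block_embed p (A : 'M[R]_(p, n)) (B : 'M[R]_(p, m')) :
  colsub block_embed (row_mx A B) = row_mx A (colsub f B).
Proof.
apply/matrixP => i j; rewrite mxE /block_embed.
by case: (split_ordP j) => b ->; rewrite ?row_mxEl ?row_mxEr ?mxE.
Qed.

Lemma mxsub_block_embed0 (A : 'M[R]_n) :
  mxsub block_embed block_embed (block_mx A 0 0 (0 : 'M_m')) = block_mx A 0 0 0.
Proof.
apply/matrixP => i j; rewrite mxE /block_embed.
case: (split_ordP i) => a ->; case: (split_ordP j) => b ->;
  by rewrite ?block_mxEul ?block_mxEur ?block_mxEdl ?block_mxEdr ?mxE.
Qed.

End BlockEmbedding.

Lemma mxsub_congruence (R : pzRingType) p q (g : 'I_q -> 'I_p) (A : 'M[R]_p) :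
  mxsub g g A = rowsub g 1%:M *m A *m (rowsub g 1%:M)^T.
Proof. by rewrite -rowsubE trmx_mxsub trmx1 mulmx_colsub mulmx1 mxsubcr. Qed.

Section MemoryWindow.
Variables (R : realType) (d nD : nat) (k : 'cV[R]_d -> 'cV[R]_d -> R) (sg : R).
Variables (X : 'M[R]_(d, nD)) (xi : nat -> 'cV[R]_d) (mb mb' t : nat).
Hypothesis le_mb : (mb <= mb')%N.

Lemma window_embed_subproof (j : 'I_(mlow mb t)) :
  (mlow mb' t - mlow mb t + j < mlow mb' t)%N.
Proof. have := ltn_ord j; rewrite /mlow; lia. Qed.

(* The shorter memory window is the suffix of the longer one. *)
Definition window_embed (j : 'I_(mlow mb t)) : 'I_(mlow mb' t) :=
  Ordinal (window_embed_subproof j).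

Definition mem_embed : 'I_(nD + mlow mb t) -> 'I_(nD + mlow mb' t) :=
  block_embed window_embed.

Lemma Ximem_window : Ximem xi mb t = colsub window_embed (Ximem xi mb' t).
Proof.
apply/matrixP => i j; rewrite !mxE /=; congr (xi _ i 0).
have := ltn_ord j; rewrite /mlow; lia.
Qed.

Lemma Xmem_window : Xmem X xi mb t = colsub mem_embed (Xmem X xi mb' t).
Proof. by rewrite /Xmem colsub_block_embed -Ximem_window. Qed.

Lemma Kmem_window :
  Kmem k sg X xi mb t = mxsub mem_embed mem_embed (Kmem k sg X xi mb' t).
Proof.
rewrite !Kmem_E Xmem_window Kmat_colsub -[in LHS](mxsub_block_embed0 window_embed).
by apply/matrixP => i j; rewrite !mxE.
Qed.

Lemma kvec_window (z : 'cV[R]_d) :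
  kvec k z (Xmem X xi mb t) = rowsub mem_embed (kvec k z (Xmem X xi mb' t)).
Proof. by rewrite Xmem_window kvec_colsub. Qed.

End MemoryWindow.

Theorem corollary2 (R : realType) (nx nu nD : nat)
    (X : 'M[R]_(nx + nu, nD)) (Y : 'M[R]_(nD, nx)) (sigma_n : R)
    (k : 'cV[R]_(nx + nu) -> 'cV[R]_(nx + nu) -> R)
    (mf : 'cV[R]_(nx + nu) -> R)
    (k_sym : kernel_symmetric k) (k_psd : kernel_psd k)
    (mf_cont : continuous mf)
    (x : nat -> 'cV[R]_nx) (u : nat -> 'cV[R]_nu)
    (mbar mbar' : nat) (hm : (mbar < mbar')%N) :
  let xi := fun s => col_mx (x s) (u s) in
  forall t : nat,
    \tr (Ft nx k sigma_n X xi mbar' t) <= \tr (Ft nx k sigma_n X xi mbar t).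
Proof.
move=> xi t; rewrite /Ft !mxtrace_scalar; apply: ler_wMn2r; rewrite /gp_var.
apply: (schur_compl_le (S := rowsub (@mem_embed nD _ _ t (ltnW hm)) 1%:M)).
- exact: trmx_Kmem.
- rewrite -mxsub_congruence; exact: Kmem_window.
- rewrite -rowsubE; exact: kvec_window.
- exact: Kmem_bordered_psd.
- exact: Kmem_bordered_psd.
Qed.
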